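(* In the setting described in the context: (i) $\operatorname{Tr}_{K/\mathbb{Q}}(\delta_A\alpha)=1$ for each $\alpha\in\{1,\varepsilon_1,\varepsilon_1^{6n+1}\varepsilon_2,\varepsilon_1^{6n+2}\varepsilon_2,\varepsilon_1^{6n+1}\varepsilon_3,\varepsilon_1^{6n+2}\varepsilon_3,\varepsilon_2\varepsilon_3,\varepsilon_1\varepsilon_2\varepsilon_3,\rho\varepsilon_2,\rho\varepsilon_1\varepsilon_2,\gamma_{6n}\varepsilon_1,\gamma_{6n}\varepsilon_1^2,\gamma_{6n+1}\varepsilon_2\varepsilon_3,\gamma_{6n+1}\varepsilon_1\varepsilon_2\varepsilon_3\}$; (ii) for $1\le j\le 3n$, $\operatorname{Tr}_{K/\mathbb{Q}}(\delta_{B,j}^+\alpha)=1$ for each $\alpha\in\{1,\varepsilon_1,\varepsilon_1^{2j-1}\varepsilon_3,\varepsilon_1^{2j}\varepsilon_3,\gamma_{2j-2}\varepsilon_1,\gamma_{2j-2}\varepsilon_1^2,\gamma_{2j},\gamma_{2j}\varepsilon_1\}$; (iii) for $1\le j\le 3n$, $\operatorname{Tr}_{K/\mathbb{Q}}(\delta_{B,j}^-\alpha)=1$ for each $\alpha\in\{1,\varepsilon_1,\varepsilon_1^{2j-1}\varepsilon_3^{-1},\varepsilon_1^{2j}\varepsilon_3^{-1},\gamma_{2j-1},\gamma_{2j-1}\varepsilon_1,\gamma_{2j+1}\varepsilon_1^{-1},\gamma_{2j+1}\}$; (iv) for $1\le j\le 6n+1$, $\operatorname{Tr}_{K/\mathbb{Q}}(\delta_{C,j}^+\alpha)=1$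 for each $\alpha\in\{\varepsilon_1^{-1},1,\varepsilon_1^{-j}\varepsilon_2,\varepsilon_1^{-j+1}\varepsilon_2\}$; (v) for $1\le j\le 6n+1$, $\operatorname{Tr}_{K/\mathbb{Q}}(\delta_{C,j}^-\alpha)=1$ for each $\alpha\in\{1,\varepsilon_1,\varepsilon_1^{j-1}\varepsilon_2,\varepsilon_1^{j}\varepsilon_2\}$.
   Context: For integers $m\ge0$ define integers $x_m,y_m$ by $\frac{x_m+y_m\sqrt5}{2}=\big(\frac{1+\sqrt5}{2}\big)^m$. Let $n\ge0$ be an integer such that $p:=y_{12n+3}^2-1$ and $r:=x_{12n+3}^2-1$ are squarefree, and let $K=\mathbb{Q}(\sqrt5,\sqrt p)$ (note $r=5p$, so $\sqrt r\in K$). Write $X=x_{12n+3}$, $Y=y_{12n+3}$, $[a,b,c,d]:=a+b\sqrt5+c\sqrt p+d\sqrt r$, and $\varepsilon_1=\frac{3+\sqrt5}{2}$, $\varepsilon_2=Y+\sqrt p$, $\varepsilon_3=X+\sqrt r$. Define $\rho:=[\frac{X+Y}{2},0,-\frac12,\frac12]$; for $1\le j\le 6n+1$, $\gamma_j:=[\frac{y_{2j-1}X+1}{2},\frac{x_{2j-1}X-(-1)^j}{10},(-1)^j\frac{x_{2j-1}}{2},(-1)^j\frac{y_{2j-1}}{2}]$, and $\gamma_0:=\gamma_1\varepsilon_1^{-1}\varepsilon_3$. Further \[ \delta_A:=\Big[\tfrac14,-\tfrac1{20},0,-\tfrac{1}{5(X+Y)}\Big],\quad \delta_{B,j}^{\pm}:=\Big[\tfrac14,-\tfrac1{20},\pm\tfrac{X-x_{4j-1}}{20p},\mp\tfrac{X-y_{4j-1}}{4r}\Big]\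 (1\le j\le 3n), \] \[ \delta_{C,j}^{\pm}:=\Big[\tfrac14,\pm\tfrac1{20},-\tfrac{Y-y_{2j-1}}{4p},\mp\tfrac{Y-x_{2j-1}}{4r}\Big]\ (1\le j\le 6n+1). \] *)

(* the field K = Q(sqrt 5, sqrt p) modelled concretely by
   coordinates over rat in the Q-basis (1, sqrt 5, sqrt p, sqrt r), r = 5p. *)
From mathcomp Require Import all_boot all_order all_algebra.
Set Implicit Arguments. Unset Strict Implicit. Unset Printing Implicit Defensive.
Import Order.TTheory GRing.Theory Num.Theory.
Local Open Scope ring_scope.

(* (x_m, y_m) with (x_m + y_m sqrt5)/2 = ((1+sqrt5)/2)^m :
   multiplying by (1+sqrt5)/2 gives x' = (x+5y)/2, y' = (x+y)/2. *)
Fixpoint xy (m : nat) : rat * rat :=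
  match m with
  | 0%N => (2, 0)
  | m'.+1 => let: (x, y) := xy m' in ((x + 5 * y) / 2, (x + y) / 2)
  end.
Definition xs (m : nat) : rat := (xy m).1.
Definition ys (m : nat) : rat := (xy m).2.

Definition sqfree (q : rat) : Prop :=
  exists z : int, q = z%:~R /\ forall d : int, (d * d %| z)%Z -> `|d| = 1.

(* [a,b,c,d] = a + b sqrt5 + c sqrt p + d sqrt r *)
Record Kel := mkK { k1 : rat; k5 : rat; kp : rat; kr : rat }.

Section Arith.
Variable p : rat.
Definition addK (u v : Kel) : Kel :=
  mkK (k1 u + k1 v) (k5 u + k5 v) (kp u + kp v) (kr u + kr v).
Definition scaleK (t : rat) (u : Kel) : Kel :=
  mkK (t * k1 u) (t * k5 u) (t * kp u) (t * kr u).
(* sqrt5^2 = 5, sqrtp^2 = p, sqrtr^2 = 5p, sqrt5 sqrtp = sqrtr,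
   sqrt5 sqrtr = 5 sqrtp, sqrtp sqrtr = p sqrt5 *)
Definition mulK (u v : Kel) : Kel :=
  let: mkK a b c d := u in let: mkK a' b' c' d' := v in
  mkK (a * a' + 5 * b * b' + p * c * c' + 5 * p * d * d')
      (a * b' + b * a' + p * (c * d' + d * c'))
      (a * c' + c * a' + 5 * (b * d' + d * b'))
      (a * d' + d * a' + b * c' + c * b').
Definition oneK := mkK 1 0 0 0.
Definition e5 := mkK 0 1 0 0.
Definition ep := mkK 0 0 1 0.
Definition er := mkK 0 0 0 1.
(* Galois conjugates sigma_{s,t}: sqrt5 -> s sqrt5, sqrtp -> t sqrtp *)
Definition conjK (s t : rat) (u : Kel) : Kel :=
  mkK (k1 u) (s * k5 u) (t * kp u) (s * t * kr u).
(* norm N_{K/Q} and inverse u^{-1} = (prod of the other conjugates) / N(u) *)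
Definition otherconj (u : Kel) : Kel :=
  mulK (conjK (-1) 1 u) (mulK (conjK 1 (-1) u) (conjK (-1) (-1) u)).
Definition normK (u : Kel) : rat := k1 (mulK u (otherconj u)).
Definition invK (u : Kel) : Kel := scaleK (normK u)^-1 (otherconj u).
Fixpoint expK (u : Kel) (k : nat) : Kel :=
  match k with 0%N => oneK | k'.+1 => mulK u (expK u k') end.
Definition zexpK (u : Kel) (k : int) : Kel :=
  match k with Posz m => expK u m | Negz m => expK (invK u) m.+1 end.
(* Tr_{K/Q}(u) = trace of the Q-linear map v |-> u v in the basis
   (1, sqrt5, sqrtp, sqrtr) *)
Definition trK (u : Kel) : rat :=
  k1 (mulK u oneK) + k5 (mulK u e5) + kp (mulK u ep) + kr (mulK u er).
End Arith.

Section Data.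
Variable n : nat.
Definition XX : rat := xs (12 * n + 3).
Definition YY : rat := ys (12 * n + 3).
Definition pp : rat := YY ^+ 2 - 1.
Definition rr : rat := XX ^+ 2 - 1.
Definition eps1 : Kel := mkK (3/2) (1/2) 0 0.
Definition eps2 : Kel := mkK YY 0 1 0.
Definition eps3 : Kel := mkK XX 0 0 1.
Definition rho : Kel := mkK ((XX + YY) / 2) 0 (- (1/2)) (1/2).
Definition gamma_pos (j : nat) : Kel :=
  mkK ((ys (2 * j - 1) * XX + 1) / 2)
      ((xs (2 * j - 1) * XX - (-1) ^+ j) / 10)
      ((-1) ^+ j * xs (2 * j - 1) / 2)
      ((-1) ^+ j * ys (2 * j - 1) / 2).
Definition gamma (j : nat) : Kel :=
  if j == 0%N then mulK pp (mulK pp (gamma_pos 1) (invK pp eps1)) eps3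
  else gamma_pos j.
Definition deltaA : Kel := mkK (1/4) (- (1/20)) 0 (- (1 / (5 * (XX + YY)))).
(* s = 1 for the + sign, s = -1 for the - sign *)
Definition deltaB (s : rat) (j : nat) : Kel :=
  mkK (1/4) (- (1/20)) (s * ((XX - xs (4 * j - 1)) / (20 * pp)))
      (- s * ((XX - ys (4 * j - 1)) / (4 * rr))).
Definition deltaC (s : rat) (j : nat) : Kel :=
  mkK (1/4) (s * (1/20)) (- ((YY - ys (2 * j - 1)) / (4 * pp)))
      (- s * ((YY - xs (2 * j - 1)) / (4 * rr))).
End Data.

From mathcomp Require Import all_boot all_order all_algebra.
From mathcomp Require Import ring lra zify.
From Stdlib Require List.
Import Order.TTheory GRing.Theory Num.Theory.
Local Open Scope ring_scope.

(* Every element in the statement has explicit coordinates in the basis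
   (1, sqrt 5, sqrt p, sqrt r): eps1^k = (x_2k + y_2k sqrt 5) / 2,
   eps3^-1 = X - sqrt r because X^2 - 5p = 1, and gamma_j is affine in X with
   coefficients x_(2j-1), y_(2j-1), gamma_0 fitting the same pattern with
   (x_-1, y_-1) = (-1, 1).  As the trace of [a, b, c, d] is 4a, each claim is an
   identity between rational functions of one pair (x_m, y_m) with m even and of
   X, Y, which holds modulo x_m^2 = 5 y_m^2 + 4 and X^2 = 5 Y^2 - 4; the
   denominators p, r and X + Y do not vanish because 2 <= Y <= X. *)

Lemma xsS m : xs m.+1 = (xs m + 5 * ys m) / 2.
Proof. by rewrite /xs /ys /=; case: (xy m). Qed.

Lemma ysS m : ys m.+1 = (xs m + ys m) / 2.
Proof. by rewrite /xs /ys /=; case: (xy m). Qed.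

Lemma xs0 : xs 0 = 2. Proof. by []. Qed.
Lemma ys0 : ys 0 = 0. Proof. by []. Qed.

(* The recurrence run backwards; it extends the sequence by x_-1 = -1, y_-1 = 1. *)
Definition xprev (u v : rat) : rat := (5 * v - u) / 2.
Definition yprev (u v : rat) : rat := (u - v) / 2.

Lemma xs_prev m : xs m = xprev (xs m.+1) (ys m.+1).
Proof. by rewrite /xprev xsS ysS; field. Qed.

Lemma ys_prev m : ys m = yprev (xs m.+1) (ys m.+1).
Proof. by rewrite /yprev xsS ysS; field. Qed.

Lemma xs_sqr m : xs m ^+ 2 = 5 * ys m ^+ 2 + 4 * (-1) ^+ m.
Proof.
elim: m => [|m IHm]; first by rewrite xs0 ys0.
have sign : (-1 : rat) ^+ m = (xs m ^+ 2 - 5 * ys m ^+ 2) / 4 by rewrite IHm; field.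
by rewrite [(-1) ^+ _]exprS sign xsS ysS; field.
Qed.

Lemma xs_sqr_even m : ~~ odd m -> xs m ^+ 2 = 5 * ys m ^+ 2 + 4.
Proof. by move=> m_even; rewrite xs_sqr -signr_odd (negbTE m_even) mulr1. Qed.

Lemma ys_ge0_le_xs m : 0 <= ys m <= xs m.
Proof.
elim: m => [|m /andP[ys_ge0 ys_le_xs]]; first by rewrite xs0 ys0.
by rewrite xsS ysS; apply/andP; split; lra.
Qed.

Lemma ys_ge2 m : 2 <= ys (m + 3).
Proof.
elim: m => [|m IHm]; first by rewrite !(xsS, ysS) xs0 ys0; lra.
by rewrite addSn ysS; case/andP: (ys_ge0_le_xs (m + 3)) => _; lra.
Qed.

(* Unfolds the arithmetic of the coordinate model only, leaving the operations
   of rat folded for ring and field. *)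
Ltac Kel_simpl :=
  cbv beta iota delta [mulK scaleK conjK otherconj normK invK expK oneK eps1 k1 k5 kp kr].

Lemma trKE p u : trK p u = 4 * k1 u.
Proof. by case: u => a b c d; rewrite /trK /e5 /ep /er; Kel_simpl; ring. Qed.

Lemma expKS p u k : expK p u k.+1 = mulK p u (expK p u k).
Proof. by []. Qed.

Lemma invK_eps1 p : invK p eps1 = mkK (3 / 2) (- (1 / 2)) 0 0.
Proof. by Kel_simpl; congr mkK; field. Qed.

Lemma expK_eps1 p k : expK p eps1 k = mkK (xs (2 * k) / 2) (ys (2 * k) / 2) 0 0.
Proof.
elim: k => [|k IHk]; first by rewrite muln0 xs0 ys0; congr mkK; field.
rewrite expKS IHk (_ : 2 * k.+1 = (2 * k).+2)%N; last by lia.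
by rewrite !(xsS, ysS); Kel_simpl; congr mkK; field.
Qed.

Lemma expK_invK_eps1 p k :
  expK p (invK p eps1) k = mkK (xs (2 * k) / 2) (- ys (2 * k) / 2) 0 0.
Proof.
elim: k => [|k IHk]; first by rewrite muln0 xs0 ys0; congr mkK; field.
rewrite expKS IHk invK_eps1 (_ : 2 * k.+1 = (2 * k).+2)%N; last by lia.
by rewrite !(xsS, ysS); Kel_simpl; congr mkK; field.
Qed.

Lemma zexpK_eps1 p (k : nat) :
  zexpK p eps1 k%:Z = mkK (xs (2 * k) / 2) (ys (2 * k) / 2) 0 0.
Proof. exact: expK_eps1. Qed.

Lemma zexpK_eps1N p (k : nat) :
  zexpK p eps1 (- k%:Z) = mkK (xs (2 * k) / 2) (- ys (2 * k) / 2) 0 0.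
Proof.
case: k => [|k]; first by rewrite oppr0 zexpK_eps1 muln0 ys0 oppr0.
by rewrite -NegzE; exact: expK_invK_eps1.
Qed.

Section Data.
Variable n : nat.

Lemma XX_sqr : XX n ^+ 2 = 5 * YY n ^+ 2 - 4.
Proof. by rewrite /XX /YY xs_sqr -signr_odd oddD oddM /= mulrN1. Qed.

Lemma YY_ge2 : 2 <= YY n.
Proof. exact: ys_ge2. Qed.

Lemma YY_le_XX : YY n <= XX n.
Proof. by case/andP: (ys_ge0_le_xs (12 * n + 3)). Qed.

Lemma normK_eps3 : normK (pp n) (eps3 n) = 1.
Proof.
move: XX_sqr; rewrite /normK /eps3 /pp; Kel_simpl.
by move: (XX n) (YY n) => X Y hX; ring: hX.
Qed.

Lemma zexpK_eps3_inv : zexpK (pp n) (eps3 n) (-1) = mkK (XX n) 0 0 (-1).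
Proof.
rewrite (_ : -1 = Negz 0) // /zexpK expKS /invK normK_eps3 invr1.
move: XX_sqr; rewrite /eps3 /pp; Kel_simpl.
by move: (XX n) (YY n) => X Y hX; congr mkK; ring: hX.
Qed.

Definition gamma_form (u v s : rat) : Kel :=
  mkK ((v * XX n + 1) / 2) ((u * XX n - s) / 10) (s * u / 2) (s * v / 2).

Lemma gamma_odd i : gamma n (2 * i).+1 = gamma_form (xs (4 * i).+1) (ys (4 * i).+1) (-1).
Proof.
rewrite /gamma /gamma_pos /= -signr_odd /= oddM /= expr1.
by rewrite (_ : 2 * (2 * i).+1 - 1 = (4 * i).+1)%N //; lia.
Qed.

Lemma gamma_even i :
  gamma n (2 * i) = gamma_form (xprev (xs (4 * i)) (ys (4 * i)))
                               (yprev (xs (4 * i)) (ys (4 * i))) 1.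
Proof.
case: i => [|i].
  rewrite !muln0 /gamma eqxx /gamma_pos invK_eps1 expr1 !(xsS, ysS) !(xs0, ys0).
  move: XX_sqr; rewrite /eps3 /gamma_form /xprev /yprev /pp; Kel_simpl.
  by move: (XX n) (YY n) => X Y hX; congr mkK; field: hX.
rewrite (_ : 2 * i.+1 = (2 * i).+2)%N; last by lia.
rewrite (_ : 4 * i.+1 = (4 * i).+3.+1)%N; last by lia.
rewrite -xs_prev -ys_prev /gamma /gamma_pos /= -signr_odd /= oddM /=.
by rewrite (_ : 2 * (2 * i).+2 - 1 = (4 * i).+3)%N //; lia.
Qed.

End Data.

Ltac positive_denominators :=
  repeat (apply/andP; split); rewrite gt_eqF //; nra.

Ltac trace_identities hxy hX :=
  do ![apply: List.Forall_cons | apply: List.Forall_nil];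
  rewrite trKE; Kel_simpl; field: hxy hX; positive_denominators.

(* Keeps of x_m, y_m, X, Y only the relations x_m^2 = 5 y_m^2 + 4,
   X^2 = 5 Y^2 - 4 and the bounds 2 <= Y <= X. *)
Ltac trace_identities_over m n :=
  let hxy := fresh "hxy" in let hX := fresh "hX" in
  (have: ~~ odd m by rewrite oddM);
  move/xs_sqr_even; move: (XX_sqr n) (YY_ge2 n) (YY_le_XX n);
  unfold eps2, eps3, gamma_form, xprev, yprev, pp, rr;
  move: (xs m) (ys m) (XX n) (YY n) => x y X Y hX ? ? hxy;
  trace_identities hxy hX.

Lemma trace_deltaC_minus n i :
  List.Forall (fun a => trK (pp n) (mulK (pp n) (deltaC n (-1) i.+1) a) = 1)
    [:: oneK; eps1; mulK (pp n) (zexpK (pp n) eps1 ((i.+1)%:Z - 1)) (eps2 n);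
        mulK (pp n) (zexpK (pp n) eps1 (i.+1)%:Z) (eps2 n)].
Proof.
rewrite (_ : (i.+1)%:Z - 1 = i%:Z); last by lia.
rewrite !zexpK_eps1 /deltaC (_ : 2 * i.+1 - 1 = (2 * i).+1)%N; last by lia.
rewrite (_ : 2 * i.+1 = (2 * i).+2)%N; last by lia.
rewrite !(xsS, ysS).
trace_identities_over (2 * i)%N n.
Qed.

Lemma trace_deltaC_plus n i :
  List.Forall (fun a => trK (pp n) (mulK (pp n) (deltaC n 1 i.+1) a) = 1)
    [:: zexpK (pp n) eps1 (-1); oneK;
        mulK (pp n) (zexpK (pp n) eps1 (- (i.+1)%:Z)) (eps2 n);
        mulK (pp n) (zexpK (pp n) eps1 (- (i.+1)%:Z + 1)) (eps2 n)].
Proof.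
rewrite (_ : - (i.+1)%:Z + 1 = - i%:Z); last by lia.
rewrite !zexpK_eps1N /deltaC (_ : 2 * i.+1 - 1 = (2 * i).+1)%N; last by lia.
rewrite (_ : 2 * i.+1 = (2 * i).+2)%N; last by lia.
rewrite !(xsS, ysS) !(xs0, ys0).
trace_identities_over (2 * i)%N n.
Qed.

Lemma trace_deltaB_plus n i :
  List.Forall (fun a => trK (pp n) (mulK (pp n) (deltaB n 1 i.+1) a) = 1)
    [:: oneK; eps1;
        mulK (pp n) (zexpK (pp n) eps1 (2 * i.+1 - 1)%N%:Z) (eps3 n);
        mulK (pp n) (zexpK (pp n) eps1 (2 * i.+1)%N%:Z) (eps3 n);
        mulK (pp n) (gamma n (2 * i.+1 - 2)%N) eps1;
        mulK (pp n) (gamma n (2 * i.+1 - 2)%N) (zexpK (pp n) eps1 2);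
        gamma n (2 * i.+1)%N; mulK (pp n) (gamma n (2 * i.+1)%N) eps1].
Proof.
rewrite (_ : 2 * i.+1 - 2 = 2 * i)%N; last by lia.
rewrite !gamma_even !zexpK_eps1 /deltaB.
rewrite (_ : 2 * (2 * i.+1 - 1) = (4 * i).+2)%N; last by lia.
rewrite (_ : 2 * (2 * i.+1) = (4 * i).+4)%N; last by lia.
rewrite (_ : 4 * i.+1 - 1 = (4 * i).+3)%N; last by lia.
rewrite (_ : 4 * i.+1 = (4 * i).+4)%N; last by lia.
rewrite !(xsS, ysS) !(xs0, ys0).
trace_identities_over (4 * i)%N n.
Qed.

Lemma trace_deltaB_minus n i :
  List.Forall (fun a => trK (pp n) (mulK (pp n) (deltaB n (-1) i.+1) a) = 1)
    [:: oneK; eps1;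
        mulK (pp n) (zexpK (pp n) eps1 (2 * i.+1 - 1)%N%:Z) (zexpK (pp n) (eps3 n) (-1));
        mulK (pp n) (zexpK (pp n) eps1 (2 * i.+1)%N%:Z) (zexpK (pp n) (eps3 n) (-1));
        gamma n (2 * i.+1 - 1)%N; mulK (pp n) (gamma n (2 * i.+1 - 1)%N) eps1;
        mulK (pp n) (gamma n (2 * i.+1 + 1)%N) (zexpK (pp n) eps1 (-1));
        gamma n (2 * i.+1 + 1)%N].
Proof.
rewrite (_ : 2 * i.+1 - 1 = (2 * i).+1)%N; last by lia.
rewrite (_ : 2 * i.+1 + 1 = (2 * i.+1).+1)%N; last by lia.
rewrite !gamma_odd zexpK_eps3_inv zexpK_eps1N !zexpK_eps1 /deltaB.
rewrite (_ : 2 * (2 * i).+1 = (4 * i).+2)%N; last by lia.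
rewrite (_ : 2 * (2 * i.+1) = (4 * i).+4)%N; last by lia.
rewrite (_ : 4 * i.+1 - 1 = (4 * i).+3)%N; last by lia.
rewrite (_ : (4 * i.+1).+1 = (4 * i).+4.+1)%N; last by lia.
rewrite !(xsS, ysS) !(xs0, ys0).
trace_identities_over (4 * i)%N n.
Qed.

Lemma trace_deltaA n :
  List.Forall (fun a => trK (pp n) (mulK (pp n) (deltaA n) a) = 1)
    [:: oneK; eps1;
        mulK (pp n) (zexpK (pp n) eps1 (6 * n + 1)%N%:Z) (eps2 n);
        mulK (pp n) (zexpK (pp n) eps1 (6 * n + 2)%N%:Z) (eps2 n);
        mulK (pp n) (zexpK (pp n) eps1 (6 * n + 1)%N%:Z) (eps3 n);
        mulK (pp n) (zexpK (pp n) eps1 (6 * n + 2)%N%:Z) (eps3 n);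
        mulK (pp n) (eps2 n) (eps3 n); mulK (pp n) eps1 (mulK (pp n) (eps2 n) (eps3 n));
        mulK (pp n) (rho n) (eps2 n); mulK (pp n) (rho n) (mulK (pp n) eps1 (eps2 n));
        mulK (pp n) (gamma n (6 * n)%N) eps1;
        mulK (pp n) (gamma n (6 * n)%N) (zexpK (pp n) eps1 2);
        mulK (pp n) (gamma n (6 * n + 1)%N) (mulK (pp n) (eps2 n) (eps3 n));
        mulK (pp n) (gamma n (6 * n + 1)%N)
          (mulK (pp n) eps1 (mulK (pp n) (eps2 n) (eps3 n)))].
Proof.
rewrite (_ : 6 * n + 1 = (2 * (3 * n)).+1)%N; last by lia.
rewrite (_ : 6 * n + 2 = (2 * (3 * n)).+2)%N; last by lia.
rewrite (_ : 6 * n = 2 * (3 * n))%N; last by lia.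
rewrite gamma_even gamma_odd !zexpK_eps1.
rewrite (_ : 2 * (2 * (3 * n)).+1 = (12 * n).+2)%N; last by lia.
rewrite (_ : 2 * (2 * (3 * n)).+2 = (12 * n).+4)%N; last by lia.
rewrite (_ : 4 * (3 * n) = 12 * n)%N; last by lia.
have /xs_sqr_even hxy : ~~ odd (12 * n) by rewrite oddM.
move: hxy (XX_sqr n) (YY_ge2 n) (YY_le_XX n).
unfold eps2, eps3, rho, gamma_form, xprev, yprev, deltaA, pp, rr, XX, YY.
rewrite addn3 !(xsS, ysS) !(xs0, ys0).
move: (xs (12 * n)) (ys (12 * n)) => x y hxy hX hY hYX.
trace_identities hxy hX.
Qed.

Theorem proposition4p3 (n : nat) :
  sqfree (pp n) -> sqfree (rr n) ->
  let p := pp n in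
  let M := mulK p in
  let Tr := trK p in
  let e1 := eps1 in let e2 := eps2 n in let e3 := eps3 n in
  let E1 := zexpK p e1 in
  let g := gamma n in
  (* (i) *)
  (forall a, List.In a
     [:: oneK; e1; M (E1 (6 * n + 1)%N%:Z) e2; M (E1 (6 * n + 2)%N%:Z) e2;
         M (E1 (6 * n + 1)%N%:Z) e3; M (E1 (6 * n + 2)%N%:Z) e3;
         M e2 e3; M e1 (M e2 e3);
         M (rho n) e2; M (rho n) (M e1 e2);
         M (g (6 * n)%N) e1; M (g (6 * n)%N) (E1 2);
         M (g (6 * n + 1)%N) (M e2 e3); M (g (6 * n + 1)%N) (M e1 (M e2 e3))] ->
     Tr (M (deltaA n) a) = 1) /\
  (* (ii) *)
  (forall j : nat, (1 <= j <= 3 * n)%N -> forall a, List.In a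
     [:: oneK; e1; M (E1 (2 * j - 1)%N%:Z) e3; M (E1 (2 * j)%N%:Z) e3;
         M (g (2 * j - 2)%N) e1; M (g (2 * j - 2)%N) (E1 2);
         g (2 * j)%N; M (g (2 * j)%N) e1] ->
     Tr (M (deltaB n 1 j) a) = 1) /\
  (* (iii) *)
  (forall j : nat, (1 <= j <= 3 * n)%N -> forall a, List.In a
     [:: oneK; e1; M (E1 (2 * j - 1)%N%:Z) (zexpK p e3 (-1));
         M (E1 (2 * j)%N%:Z) (zexpK p e3 (-1));
         g (2 * j - 1)%N; M (g (2 * j - 1)%N) e1;
         M (g (2 * j + 1)%N) (E1 (-1)); g (2 * j + 1)%N] ->
     Tr (M (deltaB n (-1) j) a) = 1) /\
  (* (iv) *)
  (forall j : nat, (1 <= j <= 6 * n + 1)%N -> forall a, List.In a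
     [:: E1 (-1); oneK; M (E1 (- j%:Z)) e2; M (E1 (- j%:Z + 1)) e2] ->
     Tr (M (deltaC n 1 j) a) = 1) /\
  (* (v) *)
  (forall j : nat, (1 <= j <= 6 * n + 1)%N -> forall a, List.In a
     [:: oneK; e1; M (E1 (j%:Z - 1)) e2; M (E1 j%:Z) e2] ->
     Tr (M (deltaC n (-1) j) a) = 1).
Proof.
(* Squarefreeness of p and r is what makes K a quartic field; the coordinate
   model of K needs no hypothesis on p, and the identities hold for every
   j >= 1. *)
move=> _ _ p M Tr e1 e2 e3 E1 g.
split; first exact/List.Forall_forall/trace_deltaA.
split; first by case=> // i _; apply/List.Forall_forall/trace_deltaB_plus.
split; first by case=> // i _; apply/List.Forall_forall/trace_deltaB_minus.
split; first by case=> // i _; apply/List.Forall_forall/trace_deltaC_plus.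
by case=> // i _; apply/List.Forall_forall/trace_deltaC_minus.
Qed.
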